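(* Let $\mathcal{G}$ be a groupoid (not necessarily finite). Define $\widetilde{S}_{*1}\colon\mathrm{Aut}(\mathcal{G})\to h\mathrm{aut}(\widetilde{S}(\mathcal{G}))$ and $\widetilde{S}_{*2}\colon\mathrm{Aut}(\mathcal{G})\to h\mathrm{Aut}(\widetilde{S}(\mathcal{G}))$ by $u\mapsto[\widetilde{S}(u)]$. Then $\eta_{\widetilde{S}(\mathcal{G})}\circ\widetilde{S}_{*2}=\widetilde{S}_{*1}$, and $\widetilde{S}_{*1}$ is a monomorphism of groups. Moreover, if $\mathcal{G}$ is finite, then $\widetilde{S}_{*2}$ is an isomorphism.
   Context: For a groupoid $\mathcal{H}$, the quasi-schemoid $\widetilde{S}(\mathcal{H})=(\widetilde{\mathcal{H}},S)$ has $ob(\widetilde{\mathcal{H}})=mor(\mathcal{H})$, $\mathrm{Hom}_{\widetilde{\mathcal{H}}}(g,h)=\{(h,g)\}$ if $t(h)=t(g)$ and empty otherwise (composition $(k,h)\circ(h,g)=(k,g)$), and partition $S=\{\mathcal{G}_f\}_{f\in mor(\mathcal{H})}$ with $\mathcal{G}_f=\{(k,l)\mid k^{-1}l=f\}$. For a functor $u\colon\mathcal{G}\to\mathcal{H}$ of groupoids, $\widetilde{S}(u)$ is the morphism of quasi-schemoids sending an object $i$ to $u(i)$ and a morphism $(h,g)$ to $(u(h),u(g))$. A quasi-schemoid is a small category with a partition of its morphisms such that for blocks $\sigma,\tau,\mu$ and $f,g\in\mu$ the number of composable pairs $(a,b)\in\sigma\times\tau$ with $a\circ b=f$ equals that with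 $a\circ b=g$; a morphism of quasi-schemoids is a functor sending each block of the source partition into some block of the target partition. Product: $(\mathcal{C},S)\times(\mathcal{E},S')=(\mathcal{C}\times\mathcal{E},\{\sigma\times\tau\})$. $[1]$ has objects $0,1$ and one non-identity morphism $0\to1$; $I=([1],\{\{f\}\}_f)$. A homotopy $H\colon F\Rightarrow G$ is a morphism $H\colon(\mathcal{C},S)\times I\to(\mathcal{D},S')$ with $H\circ\varepsilon_0=F$, $H\circ\varepsilon_1=G$ ($\varepsilon_i(a)=(a,i)$, $\varepsilon_i(f)=(f,1_i)$). $F\sim G$ means there is a homotopy $F\Rightarrow G$ or $G\Rightarrow F$; $F\simeq G$ means a finite chain $F=F_0\sim\cdots\sim F_n=G$ ($\simeq$ is an equivalence relation compatible with composition). $h\mathrm{aut}(A)$ is the group of $\simeq$-classes of self-homotopy equivalences of $A$ (morphisms $F\colon A\to A$ with some $G$ satisfying $FG\simeq1$, $GF\simeq1$) under composition; $h\mathrm{Aut}(A)$ is the group of $\simeq$-classes of automorphisms (invertible morphisms) of the quasi-schemoid $A$; $\eta_A\colon h\mathrm{Aut}(A)\to h\mathrm{aut}(A)$ is the natural map induced by inclusion. $\mathrm{Aut}(\mathcal{G})$ is the group of autofunctors (invertible functors) of $\mathcal{G}$. *)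

From Stdlib Require Import Relations List ClassicalEpsilon.
Set Implicit Arguments.
Unset Strict Implicit.
Local Notation "p .1" := (fst p) (at level 1, left associativity, format "p .1").
Local Notation "p .2" := (snd p) (at level 1, left associativity, format "p .2").

(* Small categories, given by their raw data.  A morphism f has source *)
(* [src f] and target [tgt f]; [comp f g H] is f o g (g first), defined *)
(* when H : tgt g = src f.                                             *)
Record Cat := mkCat {
  ob : Type;
  mor : Type;
  src : mor -> ob;
  tgt : mor -> ob;
  idm : ob -> mor;
  comp : forall f g : mor, tgt g = src f -> mor }.
Arguments src {c} _.
Arguments tgt {c} _.
Arguments idm {c} _.
Arguments comp {c} _ _ _.

Definition is_cat (C : Cat) : Prop :=
  (forall x : ob C, src (idm x) = x) /\
  (forall x : ob C, tgt (idm x) = x) /\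
  (forall (f g : mor C) (H : tgt g = src f), src (comp f g H) = src g) /\
  (forall (f g : mor C) (H : tgt g = src f), tgt (comp f g H) = tgt f) /\
  (forall (f : mor C) (H : tgt f = src (idm (tgt f))), comp (idm (tgt f)) f H = f) /\
  (forall (f : mor C) (H : tgt (idm (src f)) = src f), comp f (idm (src f)) H = f) /\
  (forall (f g h : mor C) (H1 : tgt h = src g) (H2 : tgt (comp g h H1) = src f)
          (H3 : tgt g = src f) (H4 : tgt h = src (comp f g H3)),
      comp f (comp g h H1) H2 = comp (comp f g H3) h H4).

Record Groupoid := mkGpd {
  gcat :> Cat;
  ginv : mor gcat -> mor gcat;
  gpd_is_cat : is_cat gcat;
  src_inv : forall f, src (ginv f) = tgt f;
  tgt_inv : forall f, tgt (ginv f) = src f;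
  inv_l : forall f (H : tgt f = src (ginv f)), comp (ginv f) f H = idm (src f);
  inv_r : forall f (H : tgt (ginv f) = src f), comp f (ginv f) H = idm (tgt f) }.

Record Fun (C D : Cat) := mkFun { fo : ob C -> ob D; fm : mor C -> mor D }.
Arguments fo {C D} _ _.
Arguments fm {C D} _ _.

Definition is_functor (C D : Cat) (F : Fun C D) : Prop :=
  (forall f, src (fm F f) = fo F (src f)) /\
  (forall f, tgt (fm F f) = fo F (tgt f)) /\
  (forall x, fm F (idm x) = idm (fo F x)) /\
  (forall f g (H : tgt g = src f) (H' : tgt (fm F g) = src (fm F f)),
      fm F (comp f g H) = comp (fm F f) (fm F g) H').

Definition fcomp (C D E : Cat) (F : Fun D E) (G : Fun C D) : Fun C E :=
  mkFun (fun x => fo F (fo G x)) (fun f => fm F (fm G f)).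

Definition idF (C : Cat) : Fun C C := mkFun (fun x => x) (fun f => f).

Definition is_autofunctor (G : Groupoid) (u : Fun G G) : Prop :=
  is_functor u /\
  exists v : Fun G G, is_functor v /\ fcomp u v = idF G /\ fcomp v u = idF G.

Definition finite_type (T : Type) : Prop := exists l : list T, forall x, In x l.

Definition finite_groupoid (G : Groupoid) : Prop :=
  finite_type (ob G) /\ finite_type (mor G).

(* Quasi-schemoids (underlying data): a category together with a       *)
(* partition of its morphisms.  The partition is encoded by a labelling *)
(* [blk : mor -> lab]; the blocks are the nonempty fibres of [blk].     *)
Record QS := mkQS { qcat :> Cat; lab : Type; blk : mor qcat -> lab }.
Arguments blk {q} _.

(* The quasi-schemoid axiom (not needed to state the theorem, recorded *)
(* for completeness): counts are compared as cardinalities, i.e. by     *)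
(* existence of a bijection.                                            *)
Definition composable_pairs (A : QS) (s t : lab A) (f : mor A) : Type :=
  { ab : mor A * mor A & { H : tgt ab.2 = src ab.1 |
      blk ab.1 = s /\ blk ab.2 = t /\ comp ab.1 ab.2 H = f } }.
Definition is_quasi_schemoid (A : QS) : Prop :=
  is_cat A /\
  forall (s t : lab A) (f g : mor A), blk f = blk g ->
    exists (phi : composable_pairs s t f -> composable_pairs s t g)
           (psi : composable_pairs s t g -> composable_pairs s t f),
      (forall x, psi (phi x) = x) /\ (forall y, phi (psi y) = y).

Definition is_qs_morphism (A B : QS) (F : Fun A B) : Prop :=
  is_functor F /\
  forall l : lab A, exists l' : lab B, forall a : mor A, blk a = l -> blk (fm F a) = l'.

Definition prod_cat (C D : Cat) : Cat :=
  @mkCat (ob C * ob D) (mor C * mor D)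
    (fun f => (src f.1, src f.2)) (fun f => (tgt f.1, tgt f.2))
    (fun x => (idm x.1, idm x.2))
    (fun f g H => (comp f.1 g.1 (f_equal fst H : tgt g.1 = src f.1),
                   comp f.2 g.2 (f_equal snd H : tgt g.2 = src f.2))).

Definition qprod (A B : QS) : QS :=
  @mkQS (prod_cat A B) (lab A * lab B) (fun f => (blk f.1, blk f.2)).

(* the category [1] : objects 0 = false, 1 = true, one arrow 0 -> 1 *)
Inductive I1mor := i0 | i1 | f01.
Definition I1src (f : I1mor) : bool := match f with i1 => true | _ => false end.
Definition I1tgt (f : I1mor) : bool := match f with i0 => false | _ => true end.
Definition cat1 : Cat :=
  @mkCat bool I1mor I1src I1tgt (fun b => if b then i1 else i0)
    (fun f g _ => match f with f01 => f01 | _ => g end).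

Definition qI : QS := @mkQS cat1 I1mor (fun f => f).

Definition eps (A : QS) (i : bool) : Fun A (qprod A qI) :=
  @mkFun A (qprod A qI) (fun a : ob A => ((a, i) : ob (prod_cat A cat1)))
    (fun f : mor A => ((f, @idm cat1 i) : mor (prod_cat A cat1))).

Definition homotopy (A B : QS) (F G : Fun A B) : Prop :=
  exists H : Fun (qprod A qI) B,
    is_qs_morphism H /\ fcomp H (eps A false) = F /\ fcomp H (eps A true) = G.

Definition hsim (A B : QS) (F G : Fun A B) : Prop := homotopy F G \/ homotopy G F.

Definition hequiv (A B : QS) : relation (Fun A B) := clos_refl_trans (Fun A B) (@hsim A B).

Definition is_self_he (A : QS) (F : Fun A A) : Prop :=
  is_qs_morphism F /\
  exists G : Fun A A, is_qs_morphism G /\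
    hequiv (fcomp F G) (idF A) /\ hequiv (fcomp G F) (idF A).

Definition is_qs_auto (A : QS) (F : Fun A A) : Prop :=
  is_qs_morphism F /\
  exists G : Fun A A, is_qs_morphism G /\ fcomp F G = idF A /\ fcomp G F = idF A.

(* Elements of haut(A): ~=-classes of self-homotopy equivalences, as predicates. *)
Definition hclass (A : QS) (F : Fun A A) : Fun A A -> Prop :=
  fun G => is_self_he G /\ hequiv F G.
(* Elements of hAut(A): ~=-classes of automorphisms. *)
Definition autclass (A : QS) (F : Fun A A) : Fun A A -> Prop :=
  fun G => is_qs_auto G /\ hequiv F G.

Definition rep (A : QS) (P : Fun A A -> Prop) : Fun A A :=
  epsilon (inhabits (idF A)) P.

Definition haut_mul (A : QS) (P Q : Fun A A -> Prop) : Fun A A -> Prop :=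
  hclass (fcomp (rep P) (rep Q)).
Definition hAut_mul (A : QS) (P Q : Fun A A -> Prop) : Fun A A -> Prop :=
  autclass (fcomp (rep P) (rep Q)).

Definition eta (A : QS) (P : Fun A A -> Prop) : Fun A A -> Prop := hclass (rep P).

Section Stilde.
Variable G : Groupoid.

Definition Smor := { p : mor G * mor G | tgt p.1 = tgt p.2 }.

(* (h,g) : g -> h *)
Definition Scomp (x y : Smor) (H : (proj1_sig y).1 = (proj1_sig x).2) : Smor :=
  exist _ ((proj1_sig x).1, (proj1_sig y).2)
    (eq_trans (proj2_sig x) (eq_trans (f_equal tgt (eq_sym H)) (proj2_sig y))).

Definition Scat : Cat :=
  @mkCat (mor G) Smor (fun x => (proj1_sig x).2) (fun x => (proj1_sig x).1)
    (fun g => exist _ (g, g) eq_refl) Scomp.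

Definition Sblk (x : Smor) : mor G :=
  comp (ginv (proj1_sig x).1) (proj1_sig x).2
    (eq_trans (eq_sym (proj2_sig x)) (eq_sym (@src_inv G (proj1_sig x).1))).

Definition Stilde : QS := @mkQS Scat (mor G) Sblk.

(* S~(u) : i |-> u(i), (h,g) |-> (u(h), u(g)).  (The second branch never
   occurs when u is a functor.) *)
Definition Stilde_map (u : Fun G G) : Fun Stilde Stilde :=
  @mkFun Stilde Stilde (fun i : mor G => fm u i)
    (fun x : Smor =>
       match excluded_middle_informative
               (tgt (fm u (proj1_sig x).1) = tgt (fm u (proj1_sig x).2)) with
       | left p => exist _ (fm u (proj1_sig x).1, fm u (proj1_sig x).2) p
       | right _ => exist _ (fm u (proj1_sig x).2, fm u (proj1_sig x).2) eq_refl
       end).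

Definition Sstar1 (u : Fun G G) : Fun Stilde Stilde -> Prop := hclass (Stilde_map u).
Definition Sstar2 (u : Fun G G) : Fun Stilde Stilde -> Prop := autclass (Stilde_map u).
End Stilde.

From Stdlib Require Import Relations List ClassicalEpsilon ProofIrrelevance
  FunctionalExtensionality PropExtensionality.
Set Implicit Arguments.
Unset Strict Implicit.

(* For an autofunctor u, the map k |-> S~(u)(k) S~(u)(1_{src k})^-1 gives
   back u, and for an arbitrary endomorphism F of S~(G) the same formula
   k |-> F(k) F(1_{src k})^-1 is invariant under homotopy: a homotopy
   H : F => K sends the arrows (k,k) and (1,1) of S~(G), crossed with 0 -> 1,
   which lie in one block, to (K k, F k) and (K 1, F 1), so
   (K k)^-1 F k = (K 1)^-1 F 1.  Hence S~(u) ~= S~(v) forces u = v.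
   Conversely this formula turns any endomorphism F of S~(G) into a functor
   u_F of G with F homotopic to S~(u_F), compatibly with composition, so
   every automorphism of S~(G) is homotopic to some S~(u) with u invertible.
   The group laws are the compatibility of ~= with composition. *)

(** * Groupoid algebra *)

(* Total composition: [cmp f g] is [f o g] when composable and, as a junk
   value, [f] otherwise.  It frees the algebra from proof arguments. *)
Definition cmp (G : Groupoid) (f g : mor G) : mor G :=
  match excluded_middle_informative (tgt g = src f) with
  | left H => comp f g H
  | right _ => f
  end.

Section Endpoints.
Variable G : Groupoid.
Implicit Types f g : mor G.

Lemma cmpE f g (H : tgt g = src f) : cmp f g = comp f g H.
Proof.
  unfold cmp. destruct excluded_middle_informative as [H'|n].
  - f_equal. apply proof_irrelevance.
  - contradiction.
Qed.

Lemma src_idm (x : ob G) : src (idm x) = x.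
Proof. apply (gpd_is_cat G). Qed.

Lemma tgt_idm (x : ob G) : tgt (idm x) = x.
Proof. apply (gpd_is_cat G). Qed.

Lemma src_cmp f g : tgt g = src f -> src (cmp f g) = src g.
Proof. intro H. rewrite (cmpE H). apply (gpd_is_cat G). Qed.

Lemma tgt_cmp f g : tgt g = src f -> tgt (cmp f g) = tgt f.
Proof. intro H. rewrite (cmpE H). apply (gpd_is_cat G). Qed.

End Endpoints.

Ltac solve_ends :=
  repeat progress (rewrite ?src_idm, ?tgt_idm, ?src_inv, ?tgt_inv;
    try match goal with
    | |- context [src (cmp ?f ?g)] => rewrite (@src_cmp _ f g) by solve_ends
    | |- context [tgt (cmp ?f ?g)] => rewrite (@tgt_cmp _ f g) by solve_ends
    end);
  try congruence.

Section GroupoidAlgebra.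
Variable G : Groupoid.
Implicit Types f g h a b : mor G.

Lemma cmp_idl f y : tgt f = y -> cmp (idm y) f = f.
Proof.
  intros <-. assert (H : tgt f = src (idm (tgt f))) by solve_ends.
  rewrite (cmpE H). apply (gpd_is_cat G).
Qed.

Lemma cmp_idr f y : src f = y -> cmp f (idm y) = f.
Proof.
  intros <-. assert (H : tgt (idm (src f)) = src f) by solve_ends.
  rewrite (cmpE H). apply (gpd_is_cat G).
Qed.

Lemma cmp_assoc f g h : tgt h = src g -> tgt g = src f ->
  cmp f (cmp g h) = cmp (cmp f g) h.
Proof.
  intros H1 H3.
  assert (H2 : tgt (comp g h H1) = src f) by (rewrite <- (cmpE H1); solve_ends).
  assert (H4 : tgt h = src (comp f g H3)) by (rewrite <- (cmpE H3); solve_ends).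
  rewrite (cmpE H1), (cmpE H3), (cmpE H2), (cmpE H4). apply (gpd_is_cat G).
Qed.

Lemma cmp_ginvl f : cmp (ginv f) f = idm (src f).
Proof. assert (H : tgt f = src (ginv f)) by solve_ends. rewrite (cmpE H). apply inv_l. Qed.

Lemma cmp_ginvr f : cmp f (ginv f) = idm (tgt f).
Proof. assert (H : tgt (ginv f) = src f) by solve_ends. rewrite (cmpE H). apply inv_r. Qed.

Lemma ginv_unique a b : tgt b = src a -> cmp a b = idm (src b) -> a = ginv b.
Proof.
  intros E H.
  rewrite <- (cmp_idr (f := a) eq_refl), <- E, <- (cmp_ginvr b).
  rewrite cmp_assoc, H by solve_ends. apply cmp_idl. solve_ends.
Qed.

Lemma ginv_idm (x : ob G) : ginv (idm x) = idm x.
Proof. symmetry. apply ginv_unique; [solve_ends|]. rewrite src_idm. apply cmp_idl. solve_ends. Qed.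

Lemma ginvK a : ginv (ginv a) = a.
Proof. symmetry. apply ginv_unique; [solve_ends|]. rewrite cmp_ginvr. solve_ends. Qed.

Lemma ginv_cmp a b : tgt b = src a -> ginv (cmp a b) = cmp (ginv b) (ginv a).
Proof.
  intro E. symmetry. apply ginv_unique; [solve_ends|].
  rewrite (cmp_assoc (f := cmp (ginv b) (ginv a))), <- (cmp_assoc (f := ginv b)) by solve_ends.
  rewrite cmp_ginvl, cmp_idr, cmp_ginvl by solve_ends. f_equal. solve_ends.
Qed.

Lemma cmp_ginvK a b : tgt a = tgt b -> cmp a (cmp (ginv a) b) = b.
Proof. intro E. rewrite cmp_assoc, cmp_ginvr by solve_ends. apply cmp_idl. congruence. Qed.

Lemma ldiv_eq_rdiv a b a' b' : tgt a = tgt b -> tgt a' = tgt b' ->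
  cmp (ginv a) b = cmp (ginv a') b' -> cmp b (ginv b') = cmp a (ginv a').
Proof.
  intros Eab Eab' E. set (c := cmp (ginv a) b) in E.
  assert (Hb : b = cmp a c) by (symmetry; apply cmp_ginvK; exact Eab).
  assert (Hb' : b' = cmp a' c) by (rewrite E; symmetry; apply cmp_ginvK; exact Eab').
  assert (Tc : tgt c = src a) by (unfold c; solve_ends).
  assert (Tc' : tgt c = src a') by (rewrite E; solve_ends).
  rewrite Hb, Hb', ginv_cmp by congruence.
  rewrite <- cmp_assoc, (cmp_assoc (f := c)), cmp_ginvr, cmp_idl by solve_ends.
  reflexivity.
Qed.

End GroupoidAlgebra.

(** * Homotopy of quasi-schemoid morphisms *)

Lemma Fun_eq (C D : Cat) (F K : Fun C D) :
  (forall x, fo F x = fo K x) -> (forall f, fm F f = fm K f) -> F = K.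
Proof. destruct F, K; simpl; intros. f_equal; apply functional_extensionality; auto. Qed.

Lemma pred_ext (T : Type) (P Q : T -> Prop) : (forall x, P x <-> Q x) -> P = Q.
Proof.
  intro H. apply functional_extensionality. intro x.
  apply propositional_extensionality, H.
Qed.

Lemma is_functor_comp (C D E : Cat) (K : Fun D E) (L : Fun C D) :
  is_functor K -> is_functor L -> is_functor (fcomp K L).
Proof.
  intros [K1 [K2 [K3 K4]]] [L1 [L2 [L3 L4]]]. split; [|split; [|split]]; intros; simpl.
  - rewrite K1, L1. reflexivity.
  - rewrite K2, L2. reflexivity.
  - rewrite L3, K3. reflexivity.
  - assert (H1 : tgt (fm L g) = src (fm L f)) by (rewrite L1, L2; congruence).
    rewrite (L4 f g H H1). apply K4.
Qed.

Lemma is_functor_idF (C : Cat) : is_functor (idF C).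
Proof.
  repeat split; intros; try reflexivity.
  simpl. f_equal. apply proof_irrelevance.
Qed.

Lemma is_cat_prod (C D : Cat) : is_cat C -> is_cat D -> is_cat (prod_cat C D).
Proof.
  intros [C1 [C2 [C3 [C4 [C5 [C6 C7]]]]]] [D1 [D2 [D3 [D4 [D5 [D6 D7]]]]]].
  repeat split; simpl; intros;
    try (destruct x; simpl; f_equal; auto; fail);
    try (destruct f; simpl in *; f_equal; auto; fail);
    f_equal; auto.
Qed.

Lemma cat1_is_cat : is_cat cat1.
Proof.
  repeat split.
  - intros []; reflexivity.
  - intros []; reflexivity.
  - intros [] [] H; simpl in *; congruence.
  - intros [] [] H; simpl in *; congruence.
  - intros [] H; reflexivity.
  - intros [] H; reflexivity.
  - intros [] [] [] H1 H2 H3 H4; simpl in *; congruence.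
Qed.

(* [d] provides a target label for the labels of empty blocks. *)
Lemma blk_preserved (A B : QS) (F : Fun A B) (d : lab A -> lab B) :
  (forall a a' : mor A, blk a = blk a' -> blk (fm F a) = blk (fm F a')) ->
  forall l, exists l', forall a, blk a = l -> blk (fm F a) = l'.
Proof.
  intros H l. destruct (classic (exists a, blk a = l)) as [[a0 Ha0]|n].
  - exists (blk (fm F a0)). intros a Ha. apply H. congruence.
  - exists (d l). intros a Ha. exfalso. eauto.
Qed.

Lemma qs_morphism_blk (A B : QS) (F : Fun A B) : is_qs_morphism F ->
  forall a a' : mor A, blk a = blk a' -> blk (fm F a) = blk (fm F a').
Proof.
  intros [_ HB] a a' E. destruct (HB (blk a)) as [l' Hl].
  rewrite (Hl a eq_refl), (Hl a' (eq_sym E)). reflexivity.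
Qed.

Lemma qs_morphism_comp (A B C : QS) (K : Fun B C) (L : Fun A B) :
  is_qs_morphism K -> is_qs_morphism L -> is_qs_morphism (fcomp K L).
Proof.
  intros HK HL. split; [apply is_functor_comp; [apply HK|apply HL]|].
  intro l. destruct (proj2 HL l) as [l1 H1]. destruct (proj2 HK l1) as [l2 H2].
  exists l2. intros a Ha. apply H2, H1, Ha.
Qed.

Definition prodI_map (A : QS) (K : Fun A A) : Fun (qprod A qI) (qprod A qI) :=
  @mkFun (qprod A qI) (qprod A qI)
    (fun p : ob (prod_cat A cat1) => ((fo K (fst p), snd p) : ob (prod_cat A cat1)))
    (fun f : mor (prod_cat A cat1) => ((fm K (fst f), snd f) : mor (prod_cat A cat1))).

Lemma prodI_map_qs (A : QS) (K : Fun A A) :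
  is_qs_morphism K -> is_qs_morphism (prodI_map K).
Proof.
  intros [[K1 [K2 [K3 K4]]] KB]. split.
  - split; [|split; [|split]]; simpl.
    + intros [f b]; simpl. rewrite K1. reflexivity.
    + intros [f b]; simpl. rewrite K2. reflexivity.
    + intros [x b]; simpl. rewrite K3. reflexivity.
    + intros [f1 f2] [g1 g2] H H'. simpl. f_equal. apply K4.
  - intros [l1 l2]. destruct (KB l1) as [l1' H]. exists (l1', l2).
    intros [a1 a2] E. simpl in *. injection E; intros; subst.
    rewrite (H a1 eq_refl). reflexivity.
Qed.

Lemma homotopy_compl (A B : QS) (K : Fun B B) (F G : Fun A B) :
  is_qs_morphism K -> homotopy F G -> homotopy (fcomp K F) (fcomp K G).
Proof.
  intros HK [H [HH [H0 H1]]]. exists (fcomp K H).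
  split; [apply qs_morphism_comp; assumption|].
  change (fcomp K (fcomp H (eps A false)) = fcomp K F /\
          fcomp K (fcomp H (eps A true)) = fcomp K G).
  rewrite H0, H1. split; reflexivity.
Qed.

Lemma homotopy_compr (A : QS) (K F G : Fun A A) :
  is_qs_morphism K -> homotopy F G -> homotopy (fcomp F K) (fcomp G K).
Proof.
  intros HK [H [HH [H0 H1]]]. exists (fcomp H (prodI_map K)).
  split; [apply qs_morphism_comp; [assumption|apply prodI_map_qs, HK]|].
  change (fcomp (fcomp H (eps A false)) K = fcomp F K /\
          fcomp (fcomp H (eps A true)) K = fcomp G K).
  rewrite H0, H1. split; reflexivity.
Qed.

Lemma hequiv_sym (A B : QS) (F G : Fun A B) : hequiv F G -> hequiv G F.
Proof.
  induction 1.
  - apply rt_step. destruct H; [right|left]; assumption.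
  - apply rt_refl.
  - eapply rt_trans; eassumption.
Qed.

Lemma hequiv_compl (A B : QS) (K : Fun B B) (F G : Fun A B) :
  is_qs_morphism K -> hequiv F G -> hequiv (fcomp K F) (fcomp K G).
Proof.
  intros HK. induction 1.
  - apply rt_step. destruct H; [left|right]; apply homotopy_compl; assumption.
  - apply rt_refl.
  - eapply rt_trans; eassumption.
Qed.

Lemma hequiv_compr (A : QS) (K F G : Fun A A) :
  is_qs_morphism K -> hequiv F G -> hequiv (fcomp F K) (fcomp G K).
Proof.
  intros HK. induction 1.
  - apply rt_step. destruct H; [left|right]; apply homotopy_compr; assumption.
  - apply rt_refl.
  - eapply rt_trans; eassumption.
Qed.

Lemma qs_auto_self_he (A : QS) (F : Fun A A) : is_qs_auto F -> is_self_he F.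
Proof.
  intros [HF [G [HG [E1 E2]]]]. split; [exact HF|]. exists G.
  rewrite E1, E2. split; [exact HG | split; apply rt_refl].
Qed.

(* [hclass] and [autclass] are both [hclass_of P] for the appropriate [P]. *)
Section HomotopyClasses.
Variable A : QS.
Variable P : Fun A A -> Prop.
Hypothesis P_qs : forall F, P F -> is_qs_morphism F.

Definition hclass_of (F : Fun A A) : Fun A A -> Prop := fun K => P K /\ hequiv F K.

Lemma hclass_of_eq F K : hequiv F K -> hclass_of F = hclass_of K.
Proof.
  intro E. apply pred_ext. intro L. unfold hclass_of.
  split; intros [H1 H2]; split; auto.
  - eapply rt_trans; [apply hequiv_sym, E | exact H2].
  - eapply rt_trans; eassumption.
Qed.

Lemma rep_hclass_of F : P F -> P (rep (hclass_of F)) /\ hequiv F (rep (hclass_of F)).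
Proof. intro HF. unfold rep. apply epsilon_spec. exists F. split; [exact HF | apply rt_refl]. Qed.

Lemma hclass_of_mul F K : P F -> P K ->
  hclass_of (fcomp (rep (hclass_of F)) (rep (hclass_of K))) = hclass_of (fcomp F K).
Proof.
  intros HF HK. destruct (rep_hclass_of HF) as [RF EF], (rep_hclass_of HK) as [RK EK].
  apply hclass_of_eq, hequiv_sym. eapply rt_trans.
  - apply hequiv_compr; [apply P_qs, HK | exact EF].
  - apply hequiv_compl; [apply P_qs, RF | exact EK].
Qed.

Lemma hclass_of_inj F K : P F -> hclass_of F = hclass_of K -> hequiv F K.
Proof.
  intros HF E. assert (HKF : hclass_of K F) by (rewrite <- E; split; [exact HF | apply rt_refl]).
  apply hequiv_sym, HKF.
Qed.

End HomotopyClasses.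

(** * The quasi-schemoid morphism S~(u) *)

Section FunctorLaws.
Variables C D : Cat.
Variable F : Fun C D.
Hypothesis HF : is_functor F.

Lemma functor_src f : src (fm F f) = fo F (src f).
Proof. apply HF. Qed.

Lemma functor_tgt f : tgt (fm F f) = fo F (tgt f).
Proof. apply HF. Qed.

Lemma functor_idm x : fm F (idm x) = idm (fo F x).
Proof. apply HF. Qed.

End FunctorLaws.

Section GroupoidFunctors.
Variables G H : Groupoid.
Variable u : Fun G H.
Hypothesis Hu : is_functor u.

Lemma functor_cmp f g : tgt g = src f -> fm u (cmp f g) = cmp (fm u f) (fm u g).
Proof.
  intro E.
  assert (E' : tgt (fm u g) = src (fm u f))
    by (rewrite (functor_tgt Hu), (functor_src Hu); congruence).
  rewrite (cmpE E), (cmpE E'). apply Hu.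
Qed.

Lemma functor_ginv f : fm u (ginv f) = ginv (fm u f).
Proof.
  apply ginv_unique.
  - rewrite (functor_tgt Hu), (functor_src Hu). solve_ends.
  - rewrite <- functor_cmp by solve_ends.
    rewrite cmp_ginvl, (functor_idm Hu), (functor_src Hu). reflexivity.
Qed.

End GroupoidFunctors.

Section StildeFunctor.
Variable G : Groupoid.

Definition smk (h g : mor G) (H : tgt h = tgt g) : Smor G :=
  exist (fun p : mor G * mor G => tgt (fst p) = tgt (snd p)) (h, g) H.

Lemma Smor_eq (x y : Smor G) : fst (proj1_sig x) = fst (proj1_sig y) ->
  snd (proj1_sig x) = snd (proj1_sig y) -> x = y.
Proof.
  destruct x as [[a b] p], y as [[c d] q]; simpl; intros; subst.
  f_equal. apply proof_irrelevance.
Qed.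

Lemma SblkE (x : Smor G) : Sblk x = cmp (ginv (fst (proj1_sig x))) (snd (proj1_sig x)).
Proof. symmetry. apply cmpE. Qed.

(* Arrows of [S~(G)] are determined by their endpoints. *)
Lemma is_functor_into_Stilde (C : Cat) (K : Fun C (Scat G)) : is_cat C ->
  (forall f, src (fm K f) = fo K (src f)) -> (forall f, tgt (fm K f) = fo K (tgt f)) ->
  is_functor K.
Proof.
  intros [C1 [C2 [C3 [C4 _]]]] K1 K2. split; [exact K1|split; [exact K2|split]].
  - intro x. apply Smor_eq.
    + change (tgt (fm K (idm x)) = fo K x). rewrite K2, C2. reflexivity.
    + change (src (fm K (idm x)) = fo K x). rewrite K1, C1. reflexivity.
  - intros f g H H'. apply Smor_eq.
    + change (tgt (fm K (comp f g H)) = tgt (fm K f)). rewrite !K2, C4. reflexivity.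
    + change (src (fm K (comp f g H)) = src (fm K g)). rewrite !K1, C3. reflexivity.
Qed.

Lemma Scat_is_cat : is_cat (Scat G).
Proof.
  repeat split; intros; try reflexivity; apply Smor_eq; reflexivity.
Qed.

Lemma Stilde_mapE (u : Fun G G) : is_functor u -> forall x,
  proj1_sig (fm (Stilde_map u) x) = (fm u (fst (proj1_sig x)), fm u (snd (proj1_sig x))).
Proof.
  intros Hu x. unfold Stilde_map; simpl.
  destruct excluded_middle_informative as [p|n]; [reflexivity|].
  exfalso. apply n. rewrite !(functor_tgt Hu). destruct x as [[a b] q]; simpl in *. congruence.
Qed.

Lemma Stilde_map_functor (u : Fun G G) : is_functor u -> is_functor (Stilde_map u).
Proof.
  intro Hu. apply is_functor_into_Stilde; [exact Scat_is_cat | |]; intro f.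
  - change (snd (proj1_sig (fm (Stilde_map u) f)) = fm u (snd (proj1_sig f))).
    rewrite Stilde_mapE by exact Hu. reflexivity.
  - change (fst (proj1_sig (fm (Stilde_map u) f)) = fm u (fst (proj1_sig f))).
    rewrite Stilde_mapE by exact Hu. reflexivity.
Qed.

Lemma Stilde_map_qs (u : Fun G G) : is_functor u -> is_qs_morphism (Stilde_map u).
Proof.
  intro Hu. split; [apply Stilde_map_functor, Hu|].
  apply (@blk_preserved (Stilde G) (Stilde G) _ (fun l => l)).
  intros [[a1 a2] p] [[b1 b2] q] E.
  change (Sblk (fm (Stilde_map u) (smk p)) = Sblk (fm (Stilde_map u) (smk q))).
  change (Sblk (smk p) = Sblk (smk q)) in E.
  rewrite !SblkE, !Stilde_mapE in * by exact Hu. simpl in *.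
  rewrite <- !(functor_ginv Hu), <- !(functor_cmp Hu), E by solve_ends. reflexivity.
Qed.

Lemma Stilde_map_comp (u v : Fun G G) : is_functor u -> is_functor v ->
  Stilde_map (fcomp u v) = fcomp (Stilde_map u) (Stilde_map v).
Proof.
  intros Hu Hv. apply Fun_eq; [reflexivity|]. intro x.
  pose proof (is_functor_comp Hu Hv) as Huv.
  apply Smor_eq; cbn [fcomp fm]; rewrite !Stilde_mapE by assumption; reflexivity.
Qed.

Lemma Stilde_map_id : Stilde_map (idF G) = idF (Stilde G).
Proof.
  apply Fun_eq; [reflexivity|]. intro x.
  apply Smor_eq; cbn [idF fm]; rewrite !Stilde_mapE by apply is_functor_idF; reflexivity.
Qed.

Lemma Stilde_map_auto (u : Fun G G) : is_autofunctor u -> is_qs_auto (Stilde_map u).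
Proof.
  intros [Hu [v [Hv [E1 E2]]]]. split; [apply Stilde_map_qs, Hu|].
  exists (Stilde_map v). split; [apply Stilde_map_qs, Hv|].
  rewrite <- !Stilde_map_comp, E1, E2, Stilde_map_id by assumption. split; reflexivity.
Qed.

End StildeFunctor.

(** * Recentering and homotopy *)

Definition recenter (G : Groupoid) (phi : mor G -> mor G) (k : mor G) : mor G :=
  cmp (phi k) (ginv (phi (idm (src k)))).

Section Injectivity.
Variable G : Groupoid.

Definition arrow01 (k : mor G) : mor (qprod (Stilde G) qI) :=
  (smk (eq_refl (tgt k)), f01).

Lemma homotopy_recenter (F K : Fun (Stilde G) (Stilde G)) : homotopy F K ->
  forall k, recenter (fo F) k = recenter (fo K) k.
Proof.
  intros [H [HH [H0 H1]]] k.
  assert (SF : forall k, snd (proj1_sig (fm H (arrow01 k))) = fo F k).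
  { intro k'. change (src (fm H (arrow01 k')) = fo F k').
    rewrite (functor_src (proj1 HH)), <- H0. reflexivity. }
  assert (TK : forall k, fst (proj1_sig (fm H (arrow01 k))) = fo K k).
  { intro k'. change (tgt (fm H (arrow01 k')) = fo K k').
    rewrite (functor_tgt (proj1 HH)), <- H1. reflexivity. }
  assert (TH : forall k, tgt (fo K k) = tgt (fo F k)).
  { intro k'. rewrite <- SF, <- TK. apply (proj2_sig (fm H (arrow01 k'))). }
  assert (B : blk (arrow01 k) = blk (arrow01 (idm (src k)))).
  { change ((Sblk (smk (eq_refl (tgt k))), f01)
      = (Sblk (smk (eq_refl (tgt (idm (src k))))), f01)).
    rewrite !SblkE. simpl. rewrite !cmp_ginvl, src_idm. reflexivity. }
  pose proof (qs_morphism_blk HH B) as B'.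
  change (Sblk (fm H (arrow01 k)) = Sblk (fm H (arrow01 (idm (src k))))) in B'.
  rewrite !SblkE, !SF, !TK in B'.
  apply ldiv_eq_rdiv; auto.
Qed.

Lemma hequiv_recenter (F K : Fun (Stilde G) (Stilde G)) : hequiv F K ->
  forall k, recenter (fo F) k = recenter (fo K) k.
Proof.
  induction 1 as [F K [E|E]| |]; intro k.
  - apply homotopy_recenter, E.
  - symmetry. apply homotopy_recenter, E.
  - reflexivity.
  - congruence.
Qed.

Lemma recenter_functor (u : Fun G G) : is_functor u -> forall k, recenter (fm u) k = fm u k.
Proof.
  intros Hu k. unfold recenter.
  rewrite (functor_idm Hu), ginv_idm. apply cmp_idr, (functor_src Hu).
Qed.

Lemma Stilde_map_hequiv_inj (u v : Fun G G) : is_functor u -> is_functor v ->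
  hequiv (Stilde_map u) (Stilde_map v) -> u = v.
Proof.
  intros Hu Hv E.
  assert (M : forall k, fm u k = fm v k).
  { intro k. rewrite <- (recenter_functor Hu), <- (recenter_functor Hv).
    exact (hequiv_recenter E k). }
  apply Fun_eq; [|exact M]. intro x.
  rewrite <- (src_idm (fo u x)), <- (src_idm (fo v x)).
  rewrite <- (functor_idm Hu), <- (functor_idm Hv), M. reflexivity.
Qed.

End Injectivity.

(* Conditions satisfied by the object part of any endomorphism of [S~(G)]. *)
Definition tgt_compatible (G : Groupoid) (phi : mor G -> mor G) : Prop :=
  forall h g, tgt h = tgt g -> tgt (phi h) = tgt (phi g).

Definition blk_compatible (G : Groupoid) (phi : mor G -> mor G) : Prop :=
  forall a b a' b', tgt a = tgt b -> tgt a' = tgt b' ->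
    cmp (ginv a) b = cmp (ginv a') b' -> cmp (ginv (phi a)) (phi b) = cmp (ginv (phi a')) (phi b').

Definition recentered (G : Groupoid) (phi : mor G -> mor G) : Fun G G :=
  mkFun (fun x => tgt (phi (idm x))) (recenter phi).

Section Recentering.
Variable G : Groupoid.
Variable phi : mor G -> mor G.
Hypothesis phi_tgt : tgt_compatible phi.
Hypothesis phi_blk : blk_compatible phi.

Lemma src_compatible k : src (phi k) = src (phi (idm (src k))).
Proof.
  assert (E : cmp (ginv (phi k)) (phi k) = cmp (ginv (phi (idm (src k)))) (phi (idm (src k)))).
  { apply phi_blk; solve_ends. rewrite !cmp_ginvl. solve_ends. }
  rewrite !cmp_ginvl in E. rewrite <- (src_idm (src (phi k))), E. solve_ends.
Qed.

Lemma tgt_idm_compatible k : tgt (phi k) = tgt (phi (idm (tgt k))).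
Proof. apply phi_tgt. solve_ends. Qed.

Lemma compatible_cmp f g : tgt g = src f ->
  phi (cmp f g) = cmp (phi f) (cmp (ginv (phi (idm (src f)))) (phi g)).
Proof.
  intro H.
  assert (E : cmp (ginv (phi f)) (phi (cmp f g)) = cmp (ginv (phi (idm (src f)))) (phi g)).
  { apply phi_blk; solve_ends.
    rewrite cmp_assoc, cmp_ginvl, cmp_idl, ginv_idm, cmp_idl by solve_ends. reflexivity. }
  rewrite <- E. symmetry. apply cmp_ginvK, phi_tgt. solve_ends.
Qed.

Lemma recentered_functor : is_functor (recentered phi).
Proof.
  unfold recentered, recenter. split; [|split; [|split]]; simpl.
  - intro k. pose proof (src_compatible k). solve_ends.
  - intro k. pose proof (src_compatible k). pose proof (tgt_idm_compatible k). solve_ends.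
  - intro x. rewrite src_idm, cmp_ginvr. reflexivity.
  - intros f g H H'. rewrite <- (cmpE H), <- (cmpE H').
    pose proof (src_compatible f). pose proof (src_compatible g).
    pose proof (tgt_idm_compatible g).
    assert (tgt (phi (idm (tgt g))) = tgt (phi (idm (src f)))) by congruence.
    rewrite (src_cmp H), compatible_cmp, <- !cmp_assoc by solve_ends. reflexivity.
Qed.

Lemma recenter_ldiv h g : tgt h = tgt g ->
  cmp (ginv (recenter phi h)) (phi g) = cmp (phi (idm (src h))) (cmp (ginv (phi h)) (phi g)).
Proof.
  intro H. unfold recenter. pose proof (src_compatible h). pose proof (phi_tgt H).
  rewrite ginv_cmp, ginvK, <- cmp_assoc by solve_ends. reflexivity.
Qed.

(* With [f0 = phi' 1] and [X = (phi 1)^-1 phi (f0^-1)], both [phi (phi' k f0^-1)]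
   and [phi (f0 f0^-1)] pick up the same right factor [X], which cancels. *)
Lemma recenter_comp (phi' : mor G -> mor G) :
  (forall k, src (phi' k) = src (phi' (idm (src k)))) ->
  forall k, recenter phi (recenter phi' k) = recenter (fun k => phi (phi' k)) k.
Proof.
  intros phi'_src k. unfold recenter.
  set (f0 := phi' (idm (src k))). set (a := phi' k).
  assert (Ha : src a = src f0) by apply phi'_src.
  set (X := cmp (ginv (phi (idm (src a)))) (phi (ginv f0))).
  assert (TX : tgt (phi (ginv f0)) = tgt (phi (idm (src a)))).
  { rewrite tgt_idm_compatible, tgt_inv, Ha. reflexivity. }
  assert (Sa : src (phi a) = src (phi (idm (src a)))) by apply src_compatible.
  assert (Sf : src (phi f0) = src (phi (idm (src f0)))) by apply src_compatible.
  assert (E1 : phi (cmp a (ginv f0)) = cmp (phi a) X) by (apply compatible_cmp; solve_ends).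
  assert (E2 : phi (idm (tgt f0)) = cmp (phi f0) X).
  { rewrite <- cmp_ginvr, compatible_cmp, <- Ha by solve_ends. reflexivity. }
  assert (TX' : tgt X = src (phi a)) by (unfold X; solve_ends).
  replace (src (cmp a (ginv f0))) with (tgt f0) by (symmetry; solve_ends).
  rewrite E1, E2, ginv_cmp by congruence.
  rewrite <- cmp_assoc, (cmp_assoc (f := X)), cmp_ginvr, cmp_idl by solve_ends.
  reflexivity.
Qed.

Lemma recentered_comp (phi' : mor G -> mor G) :
  (forall k, src (phi' k) = src (phi' (idm (src k)))) ->
  fcomp (recentered phi) (recentered phi') = recentered (fun k => phi (phi' k)).
Proof.
  intro phi'_src. apply Fun_eq; simpl.
  - intro x. symmetry. apply tgt_idm_compatible.
  - apply recenter_comp, phi'_src.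
Qed.

End Recentering.

Lemma recentered_id (G : Groupoid) : recentered (fun k : mor G => k) = idF G.
Proof. apply Fun_eq; simpl; intros; [solve_ends|]. apply (recenter_functor (is_functor_idF G)). Qed.

Section StildeEndomorphisms.
Variable G : Groupoid.
Variable F : Fun (Stilde G) (Stilde G).
Hypothesis HF : is_qs_morphism F.

Lemma Stilde_endoE x :
  proj1_sig (fm F x) = (fo F (fst (proj1_sig x)), fo F (snd (proj1_sig x))).
Proof.
  rewrite (surjective_pairing (proj1_sig (fm F x))). f_equal.
  - exact (functor_tgt (proj1 HF) x).
  - exact (functor_src (proj1 HF) x).
Qed.

Lemma Stilde_endo_tgt : tgt_compatible (fo F).
Proof.
  intros h g H. pose proof (proj2_sig (fm F (smk H))) as P.
  simpl in P. rewrite Stilde_endoE in P. exact P.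
Qed.

Lemma Stilde_endo_blk : blk_compatible (fo F).
Proof.
  intros a b a' b' H H' E.
  assert (E' : blk (q := Stilde G) (smk H) = blk (q := Stilde G) (smk H'))
    by (change (Sblk (smk H) = Sblk (smk H')); rewrite !SblkE; exact E).
  pose proof (qs_morphism_blk HF E') as B.
  change (Sblk (fm F (smk H)) = Sblk (fm F (smk H'))) in B.
  rewrite !SblkE, !Stilde_endoE in B. exact B.
Qed.

Let UF : Fun G G := recentered (fo F).

Lemma recentered_Stilde_endo_functor : is_functor UF.
Proof. apply recentered_functor; [apply Stilde_endo_tgt | apply Stilde_endo_blk]. Qed.

Lemma recentered_Stilde_endo_tgt h g : tgt h = tgt g -> tgt (fm UF h) = tgt (fo F g).
Proof.
  intro H. rewrite (functor_tgt recentered_Stilde_endo_functor). simpl. rewrite H.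
  symmetry. apply tgt_idm_compatible, Stilde_endo_tgt.
Qed.

(* The homotopy [F => S~(UF)] sends [(h,g) x (0 -> 1)] to [(UF h, F g)]. *)
Definition homotopy_arrow (x : Smor G) : Smor G := smk (recentered_Stilde_endo_tgt (proj2_sig x)).

Definition homotopy_to_recentered : Fun (qprod (Stilde G) qI) (Stilde G) :=
  @mkFun (qprod (Stilde G) qI) (Stilde G)
    (fun p : ob (prod_cat (Scat G) cat1) => if snd p then fm UF (fst p) else fo F (fst p))
    (fun m : mor (prod_cat (Scat G) cat1) => match snd m with
       | i0 => fm F (fst m) | i1 => fm (Stilde_map UF) (fst m) | f01 => homotopy_arrow (fst m) end).

Lemma homotopy_arrow_blk (x x' : Smor G) :
  Sblk x = Sblk x' -> Sblk (homotopy_arrow x) = Sblk (homotopy_arrow x').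
Proof.
  destruct x as [[h g] p], x' as [[h' g'] p']. simpl in p, p'.
  rewrite !SblkE. simpl. intro E.
  assert (Eh : src h = src h').
  { rewrite <- (tgt_inv h), <- (tgt_inv h'), <- (tgt_cmp (f := ginv h) (g := g)),
      <- (tgt_cmp (f := ginv h') (g := g')), E by solve_ends. reflexivity. }
  simpl. rewrite !(recenter_ldiv Stilde_endo_tgt Stilde_endo_blk) by assumption.
  rewrite Eh, (Stilde_endo_blk p p' E). reflexivity.
Qed.

Lemma homotopy_to_recentered_functor : is_functor homotopy_to_recentered.
Proof.
  apply is_functor_into_Stilde.
  - apply is_cat_prod; [apply Scat_is_cat | apply cat1_is_cat].
  - intros [x m]. destruct m.
    + exact (functor_src (proj1 HF) x).
    + exact (functor_src (Stilde_map_functor recentered_Stilde_endo_functor) x).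
    + reflexivity.
  - intros [x m]. destruct m.
    + exact (functor_tgt (proj1 HF) x).
    + exact (functor_tgt (Stilde_map_functor recentered_Stilde_endo_functor) x).
    + reflexivity.
Qed.

Lemma homotopy_to_recentered_qs : is_qs_morphism homotopy_to_recentered.
Proof.
  split; [exact homotopy_to_recentered_functor|].
  apply (@blk_preserved (qprod (Stilde G) qI) (Stilde G) _ fst).
  intros [x m] [x' m'] E. change ((Sblk x, m) = (Sblk x', m')) in E.
  injection E as Ex <-.
  assert (Ex' : blk (q := Stilde G) x = blk (q := Stilde G) x') by exact Ex.
  destruct m.
  - exact (qs_morphism_blk HF Ex').
  - exact (qs_morphism_blk (Stilde_map_qs recentered_Stilde_endo_functor) Ex').
  - exact (homotopy_arrow_blk Ex).
Qed.

Lemma homotopic_Stilde_recentered : homotopy F (Stilde_map UF).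
Proof.
  exists homotopy_to_recentered.
  split; [exact homotopy_to_recentered_qs | split; apply Fun_eq; reflexivity].
Qed.

End StildeEndomorphisms.

(** * The maps S~_{*1} and S~_{*2} *)

Section StildeStar.
Variable G : Groupoid.
Implicit Types u v : Fun G G.

Lemma eta_Sstar2 u : is_autofunctor u -> eta (Sstar2 u) = Sstar1 u.
Proof.
  intro Hu. symmetry. apply (hclass_of_eq (@is_self_he (Stilde G))).
  exact (proj2 (rep_hclass_of (P := @is_qs_auto (Stilde G)) (Stilde_map_auto Hu))).
Qed.

Lemma Sstar1_mul u v : is_autofunctor u -> is_autofunctor v ->
  Sstar1 (fcomp u v) = haut_mul (Sstar1 u) (Sstar1 v).
Proof.
  intros Hu Hv. unfold Sstar1. rewrite Stilde_map_comp by apply Hu || apply Hv.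
  symmetry. apply hclass_of_mul; [exact (fun F HF => proj1 HF) | ..];
    apply qs_auto_self_he, Stilde_map_auto; assumption.
Qed.

Lemma Sstar2_mul u v : is_autofunctor u -> is_autofunctor v ->
  Sstar2 (fcomp u v) = hAut_mul (Sstar2 u) (Sstar2 v).
Proof.
  intros Hu Hv. unfold Sstar2. rewrite Stilde_map_comp by apply Hu || apply Hv.
  symmetry. apply hclass_of_mul; [exact (fun F HF => proj1 HF) | ..];
    apply Stilde_map_auto; assumption.
Qed.

Lemma Sstar1_inj u v : is_autofunctor u -> is_autofunctor v -> Sstar1 u = Sstar1 v -> u = v.
Proof.
  intros Hu Hv E. apply Stilde_map_hequiv_inj; [apply Hu | apply Hv |].
  exact (hclass_of_inj (qs_auto_self_he (Stilde_map_auto Hu)) E).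
Qed.

Lemma Sstar2_inj u v : is_autofunctor u -> is_autofunctor v -> Sstar2 u = Sstar2 v -> u = v.
Proof.
  intros Hu Hv E. apply Stilde_map_hequiv_inj; [apply Hu | apply Hv |].
  exact (hclass_of_inj (Stilde_map_auto Hu) E).
Qed.

Lemma recentered_inverse (K K' : Fun (Stilde G) (Stilde G)) :
  is_qs_morphism K -> is_qs_morphism K' -> fcomp K K' = idF (Stilde G) ->
  fcomp (recentered (fo K)) (recentered (fo K')) = idF G.
Proof.
  intros HK HK' E.
  rewrite recentered_comp by
    first [apply Stilde_endo_tgt, HK | apply Stilde_endo_blk, HK
          | apply src_compatible, Stilde_endo_blk, HK'].
  change (fun k => fo K (fo K' k)) with (fo (fcomp K K')).
  rewrite E. apply recentered_id.
Qed.

Lemma Sstar2_surj (F : Fun (Stilde G) (Stilde G)) : is_qs_auto F ->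
  exists u, is_autofunctor u /\ Sstar2 u = autclass F.
Proof.
  intros [HF [F' [HF' [E1 E2]]]]. exists (recentered (fo F)). split.
  - split; [apply recentered_Stilde_endo_functor, HF|].
    exists (recentered (fo F')). split; [apply recentered_Stilde_endo_functor, HF'|].
    split; apply recentered_inverse; assumption.
  - apply (hclass_of_eq (@is_qs_auto (Stilde G))), hequiv_sym, rt_step.
    left. apply homotopic_Stilde_recentered, HF.
Qed.

End StildeStar.

Theorem theorem4p7 (G : Groupoid) :
  (forall u : Fun G G, is_autofunctor u ->
     is_qs_auto (Stilde_map u) /\ is_self_he (Stilde_map u)) /\
  (forall u : Fun G G, is_autofunctor u -> eta (Sstar2 u) = Sstar1 u) /\
  (forall u v : Fun G G, is_autofunctor u -> is_autofunctor v ->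
     Sstar1 (fcomp u v) = haut_mul (Sstar1 u) (Sstar1 v)) /\
  (forall u v : Fun G G, is_autofunctor u -> is_autofunctor v ->
     Sstar1 u = Sstar1 v -> u = v) /\
  (finite_groupoid G ->
     (forall u v : Fun G G, is_autofunctor u -> is_autofunctor v ->
        Sstar2 (fcomp u v) = hAut_mul (Sstar2 u) (Sstar2 v)) /\
     (forall u v : Fun G G, is_autofunctor u -> is_autofunctor v ->
        Sstar2 u = Sstar2 v -> u = v) /\
     (forall F : Fun (Stilde G) (Stilde G), is_qs_auto F ->
        exists u : Fun G G, is_autofunctor u /\ Sstar2 u = autclass F)).
Proof.
  split; [|split; [|split; [|split]]].
  - intros u Hu. split; [|apply qs_auto_self_he]; apply Stilde_map_auto, Hu.
  - apply eta_Sstar2.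
  - apply Sstar1_mul.
  - apply Sstar1_inj.
  - intros _. split; [|split].
    + apply Sstar2_mul.
    + apply Sstar2_inj.
    + apply Sstar2_surj.
Qed.
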